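(* Let $b(x)=\frac{x-i}{x+i}$, $\Lambda=\operatorname{diag}(b,b^{-1})$, $\Lambda^+=\operatorname{diag}(b,1)$, $\Lambda^-=\operatorname{diag}(1,b^{-1})$, and for real $\varepsilon$ let $$G_\varepsilon(x)=\begin{pmatrix}\frac{x^2+xi(-18+8e^{i\varepsilon x}+8e^{-i\varepsilon x})-1}{x^2+1}&\frac{xi(24-12e^{i\varepsilon x}-12e^{-i\varepsilon x})}{x^2+1}\\[1mm] \frac{xi(-12+4e^{i\varepsilon x}+8e^{-i\varepsilon x})}{x^2+1}&\frac{x^2+xi(18-8e^{i\varepsilon x}-8e^{-i\varepsilon x})-1}{x^2+1}\end{pmatrix},$$ so that $G_0=\Lambda$. Then for each $\varepsilon\in(0,1]$ there exist $2\times2$ matrix functions $N^\pm_\varepsilon$, continuous and bounded on $\overline{\Pi^\pm}$ and analytic in $\Pi^\pm$, such that $\Lambda^+(x)N^+_\varepsilon(x)+N^-_\varepsilon(x)\Lambda^-(x)=G_\varepsilon(x)-\Lambda(x)$ for all $x\in\mathbb{R}$ and $\sup_{\overline{\Pi^\pm}}|N^\pm_\varepsilon|=O(\varepsilon)$ as $\varepsilon\to0$. Consequently $\sup_{x\in\mathbb{R}}\big\|G_\varepsilon(x)-\big(I+N^-_\varepsilon(\Lambda^+)^{-1}\big)\Lambda\big(I+(\Lambda^-)^{-1}N^+_\varepsilon\big)\big\|=O(\varepsilon^2)$, and for small $\varepsilon$ the two outer factors are invertible with bounded inverses on $\overline{\Pi^-}$, $\overline{\Pi^+}$ respectively, so this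 product is a factorization with partial indices $1,-1$.
   Context: $\Pi^+=\{\operatorname{Im}z>0\}$, $\Pi^-=\{\operatorname{Im}z<0\}$; $I$ is the $2\times2$ identity matrix. The matrix $\Lambda$ has a right factorization with trivial factors $G_0^\pm=I$ and partial indices $\varkappa_1=1$, $\varkappa_2=-1$. *)

From Stdlib Require Import Reals Lra.
Open Scope R_scope.

Definition Cx : Type := (R * R)%type.
Definition Re (z : Cx) : R := fst z.
Definition Im (z : Cx) : R := snd z.
Definition RtoC (a : R) : Cx := (a, 0).
Definition C0 : Cx := (0, 0).
Definition C1 : Cx := (1, 0).
Definition Ci : Cx := (0, 1).
Definition Cadd (z w : Cx) : Cx := (Re z + Re w, Im z + Im w).
Definition Copp (z : Cx) : Cx := (- Re z, - Im z).
Definition Csub (z w : Cx) : Cx := Cadd z (Copp w).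
Definition Cmul (z w : Cx) : Cx :=
  (Re z * Re w - Im z * Im w, Re z * Im w + Im z * Re w).
Definition Cinv (z : Cx) : Cx :=
  (Re z / (Re z ^ 2 + Im z ^ 2), - Im z / (Re z ^ 2 + Im z ^ 2)).
Definition Cdiv (z w : Cx) : Cx := Cmul z (Cinv w).
Definition Cmod (z : Cx) : R := sqrt (Re z ^ 2 + Im z ^ 2).
Definition Cexpi (t : R) : Cx := (cos t, sin t).

Definition upper_open (z : Cx) : Prop := 0 < Im z.
Definition lower_open (z : Cx) : Prop := Im z < 0.
Definition upper_closed (z : Cx) : Prop := 0 <= Im z.
Definition lower_closed (z : Cx) : Prop := Im z <= 0.

Record M2 : Type := mkM2 { m11 : Cx; m12 : Cx; m21 : Cx; m22 : Cx }.
Definition M2id : M2 := mkM2 C1 C0 C0 C1.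
Definition M2diag (a d : Cx) : M2 := mkM2 a C0 C0 d.
Definition M2add (A B : M2) : M2 :=
  mkM2 (Cadd (m11 A) (m11 B)) (Cadd (m12 A) (m12 B))
       (Cadd (m21 A) (m21 B)) (Cadd (m22 A) (m22 B)).
Definition M2sub (A B : M2) : M2 :=
  mkM2 (Csub (m11 A) (m11 B)) (Csub (m12 A) (m12 B))
       (Csub (m21 A) (m21 B)) (Csub (m22 A) (m22 B)).
Definition M2mul (A B : M2) : M2 :=
  mkM2 (Cadd (Cmul (m11 A) (m11 B)) (Cmul (m12 A) (m21 B)))
       (Cadd (Cmul (m11 A) (m12 B)) (Cmul (m12 A) (m22 B)))
       (Cadd (Cmul (m21 A) (m11 B)) (Cmul (m22 A) (m21 B)))
       (Cadd (Cmul (m21 A) (m12 B)) (Cmul (m22 A) (m22 B))).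
Definition M2det (A : M2) : Cx :=
  Csub (Cmul (m11 A) (m22 A)) (Cmul (m12 A) (m21 A)).
(* inverse via the adjugate (meaningful when det <> 0) *)
Definition M2inv (A : M2) : M2 :=
  let d := Cinv (M2det A) in
  mkM2 (Cmul d (m22 A)) (Cmul d (Copp (m12 A)))
       (Cmul d (Copp (m21 A))) (Cmul d (m11 A)).
(* matrix norm: maximum modulus of the entries (equivalent to any other
   norm on 2x2 matrices, so O(.) statements are unaffected) *)
Definition M2norm (A : M2) : R :=
  Rmax (Rmax (Cmod (m11 A)) (Cmod (m12 A))) (Rmax (Cmod (m21 A)) (Cmod (m22 A))).

Definition Ccont_on (D : Cx -> Prop) (f : Cx -> Cx) : Prop :=
  forall z, D z -> forall e, 0 < e -> exists d, 0 < d /\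
    forall w, D w -> Cmod (Csub w z) < d -> Cmod (Csub (f w) (f z)) < e.
Definition Cholo_on (D : Cx -> Prop) (f : Cx -> Cx) : Prop :=
  forall z, D z -> exists l : Cx, forall e, 0 < e -> exists d, 0 < d /\
    forall h : Cx, h <> C0 -> Cmod h < d ->
      Cmod (Csub (Cdiv (Csub (f (Cadd z h)) (f z)) h) l) < e.
Definition M2entrywise (P : (Cx -> Cx) -> Prop) (F : Cx -> M2) : Prop :=
  P (fun z => m11 (F z)) /\ P (fun z => m12 (F z)) /\
  P (fun z => m21 (F z)) /\ P (fun z => m22 (F z)).
Definition M2bounded_on (D : Cx -> Prop) (F : Cx -> M2) : Prop :=
  exists M, forall z, D z -> M2norm (F z) <= M.
Definition M2_good (Do Dc : Cx -> Prop) (F : Cx -> M2) : Prop :=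
  M2entrywise (Ccont_on Dc) F /\ M2bounded_on Dc F /\ M2entrywise (Cholo_on Do) F.

Definition b (z : Cx) : Cx := Cdiv (Csub z Ci) (Cadd z Ci).
Definition Lam (z : Cx) : M2 := M2diag (b z) (Cinv (b z)).
Definition Lamp (z : Cx) : M2 := M2diag (b z) C1.
Definition Lamm (z : Cx) : M2 := M2diag C1 (Cinv (b z)).

Definition Geps (eps x : R) : M2 :=
  let X := RtoC x in
  let e1 := Cexpi (eps * x) in
  let e2 := Cexpi (- (eps * x)) in
  let den := RtoC (x ^ 2 + 1) in
  let xi := Cmul X Ci in
  let lin (a c1 c2 : R) : Cx :=
    Cadd (RtoC a) (Cadd (Cmul (RtoC c1) e1) (Cmul (RtoC c2) e2)) in
  mkM2
    (Cdiv (Csub (Cadd (RtoC (x ^ 2)) (Cmul xi (lin (-18) 8 8))) C1) den)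
    (Cdiv (Cmul xi (lin 24 (-12) (-12))) den)
    (Cdiv (Cmul xi (lin (-12) 4 8)) den)
    (Cdiv (Csub (Cadd (RtoC (x ^ 2)) (Cmul xi (lin 18 (-8) (-8)))) C1) den).

From Pilot Require Import Defs.
From Stdlib Require Import Reals Lra ZArith.
From Coquelicot Require Import Coquelicot.
Open Scope R_scope.

(* The entries of [G_eps - Lam] are rational functions of [x] with poles at [+-i],
   multiplied by [e^(+-i eps x)].  Splitting them into partial fractions and
   assigning each piece to the half-plane where it is analytic (a pole in the wrong
   half-plane is removed by subtracting the value of the numerator there) gives
   [N^+-] explicitly in terms of [phi_n w = (e^w - sum_(k<n) w^k/k!) / w^n] at
   [w = i eps (z - i)], resp. [w = -i eps (z + i)].  These are entire, bounded by
   [e^(max 0 (Re w))] by the Taylor remainder estimate, hence bounded on the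
   relevant closed half-plane, and every term carries a factor [eps] or
   [e^(-eps) - 1], so [|N^+-| = O(eps)].
   Since [Lam = Lam^+ Lam^-], the product [(I + N^- (Lam^+)^-1) Lam (I + (Lam^-)^-1 N^+)]
   equals [Lam + Lam^+ N^+ + N^- Lam^- + N^- N^+], so it differs from [G_eps] by
   exactly [- N^- N^+ = O(eps^2)].  Finally [|(Lam^+)^-1| <= 1] below and
   [|(Lam^-)^-1| <= 1] above the real line, so the outer factors are [I + O(eps)],
   invertible with inverses bounded by [4]. *)

(* The operations of [Defs] agree with Coquelicot's, whose ring and field
   tactics and [Cmod] lemmas we use. *)
Lemma Defs_Cadd : Defs.Cadd = Cplus. Proof. reflexivity. Qed.
Lemma Defs_Cmul : Defs.Cmul = Cmult. Proof. reflexivity. Qed.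
Lemma Defs_Csub : Defs.Csub = Cminus. Proof. reflexivity. Qed.
Lemma Defs_Copp : Defs.Copp = Copp. Proof. reflexivity. Qed.
Lemma Defs_Cdiv : Defs.Cdiv = Cdiv. Proof. reflexivity. Qed.
Lemma Defs_Cinv : Defs.Cinv = Cinv. Proof. reflexivity. Qed.
Lemma Defs_Cmod : Defs.Cmod = Cmod. Proof. reflexivity. Qed.
Lemma Defs_C0 : Defs.C0 = RtoC 0. Proof. reflexivity. Qed.
Lemma Defs_C1 : Defs.C1 = RtoC 1. Proof. reflexivity. Qed.
Lemma Defs_Ci : Defs.Ci = Ci. Proof. reflexivity. Qed.
Lemma Defs_RtoC : Defs.RtoC = RtoC. Proof. reflexivity. Qed.

Ltac to_coquelicot :=
  rewrite ?Defs_Cadd, ?Defs_Cmul, ?Defs_Csub, ?Defs_Copp, ?Defs_Cdiv, ?Defs_Cinv,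
    ?Defs_Cmod, ?Defs_C0, ?Defs_C1, ?Defs_Ci, ?Defs_RtoC in *.

(* [ring] and [field] need the equation to be stated in [C] rather than [Cx]. *)
Ltac C_eq := match goal with |- ?a = ?b => change (@eq C a b) end.

(** * Complex differentiability *)

Notation is_Cderive f z l := (@is_derive C_AbsRing (AbsRing_NormedModule C_AbsRing) f z l).

Definition holo (f : C -> C) (z : C) : Prop := exists l, is_Cderive f z l.

Lemma is_Cderive_remainder (f : C -> C) z l : is_Cderive f z l ->
  forall eps, 0 < eps -> exists d, 0 < d /\ forall h, Cmod h < d ->
    Cmod (f (z + h) - f z - h * l)%C <= eps * Cmod h.
Proof.
  intros [_ Hd] eps Heps.
  destruct (Hd z (fun P HP => HP) (mkposreal eps Heps)) as [d Hball].
  exists d; split; [apply cond_pos|].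
  intros h Hh.
  assert (Hzh : ball z d (z + h)%C).
  { apply (norm_compat1 (V := AbsRing_NormedModule C_AbsRing)). simpl.
    change (Cmod ((z + h) - z)%C < d). replace ((z + h) - z)%C with h by ring. exact Hh. }
  specialize (Hball _ Hzh).
  change (Cmod (f (z + h) - f z - ((z + h) - z) * l)%C <= eps * Cmod ((z + h) - z)%C) in Hball.
  replace ((z + h) - z)%C with h in Hball by ring. exact Hball.
Qed.

Lemma is_Cderive_of_remainder (f : C -> C) z l :
  (forall eps, 0 < eps -> exists d, 0 < d /\ forall h, Cmod h < d ->
    Cmod (f (z + h) - f z - h * l)%C <= eps * Cmod h) -> is_Cderive f z l.
Proof.
  intros H. split; [apply is_linear_scal_l|].
  intros x Hx.
  apply (is_filter_lim_locally_unique (V := AbsRing_NormedModule C_AbsRing)) in Hx. subst x.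
  intros eps. destruct (H eps (cond_pos eps)) as [d [Hd Hh]].
  set (nf := @norm_factor _ (AbsRing_NormedModule C_AbsRing)).
  assert (Hnf : 0 < nf) by apply norm_factor_gt_0.
  exists (mkposreal (d / nf) (Rdiv_lt_0_compat _ _ Hd Hnf)).
  intros y By.
  apply (norm_compat2 (V := AbsRing_NormedModule C_AbsRing)) in By. simpl in By.
  change (Cmod (y - z)%C < nf * (d / nf)) in By.
  replace (nf * (d / nf)) with d in By by (field; lra).
  specialize (Hh _ By).
  assert (Ey : (z + (y - z))%C = (y : C)) by (change (z + (y - z) = y)%C; ring).
  rewrite Ey in Hh.
  change (Cmod (f y - f z - (y - z) * l)%C <= eps * Cmod (y - z)%C). exact Hh.
Qed.

Lemma is_Cderive_of_quadratic_remainder (f : C -> C) z l r K : 0 < r -> 0 <= K ->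
  (forall h, Cmod h <= r -> Cmod (f (z + h) - f z - h * l)%C <= K * (Cmod h * Cmod h)) ->
  is_Cderive f z l.
Proof.
  intros Hr HK H. apply is_Cderive_of_remainder. intros eps Heps.
  exists (Rmin r (eps / (K + 1))). split.
  { apply Rmin_glb_lt; [lra|apply Rdiv_lt_0_compat; lra]. }
  intros h Hh.
  assert (Hhr : Cmod h < r) by (eapply Rlt_le_trans; [exact Hh|apply Rmin_l]).
  assert (Hhe : Cmod h < eps / (K + 1)) by (eapply Rlt_le_trans; [exact Hh|apply Rmin_r]).
  eapply Rle_trans; [apply H; lra|].
  assert (H0 := Cmod_ge_0 h).
  apply Rmult_lt_compat_r with (r := K + 1) in Hhe; [|lra].
  replace (eps / (K + 1) * (K + 1)) with eps in Hhe by (field; lra).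
  apply Rle_trans with (Cmod h * (K + 1) * Cmod h); [nra|].
  apply Rmult_le_compat_r; lra.
Qed.

Lemma holo_const (c z : C) : holo (fun _ => c) z.
Proof. exists zero. apply (is_derive_const (K := C_AbsRing)). Qed.

Lemma holo_id (z : C) : holo (fun w => w) z.
Proof. exists one. exact (is_derive_id (K := C_AbsRing) z). Qed.

Lemma holo_plus f g z : holo f z -> holo g z -> holo (fun w => f w + g w)%C z.
Proof.
  intros [a Ha] [b Hb]. eexists.
  exact (is_derive_plus (K := C_AbsRing) (V := AbsRing_NormedModule C_AbsRing) f g z a b Ha Hb).
Qed.

Lemma holo_mult f g z : holo f z -> holo g z -> holo (fun w => f w * g w)%C z.
Proof.
  intros [a Ha] [b Hb]. eexists.
  exact (is_derive_mult (K := C_AbsRing) f g z a b Ha Hb Cmult_comm).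
Qed.

Lemma holo_comp f g z : holo f (g z) -> holo g z -> holo (fun w => f (g w)) z.
Proof.
  intros [a Ha] [b Hb]. eexists.
  exact (is_derive_comp (K := C_AbsRing) (V := AbsRing_NormedModule C_AbsRing) f g z a b Ha Hb).
Qed.

Lemma holo_opp f z : holo f z -> holo (fun w => - f w)%C z.
Proof.
  intros Hf. destruct (holo_mult (fun _ => (-1)%C) f z (holo_const _ _) Hf) as [l Hl].
  exists l. eapply is_derive_ext; [|exact Hl]. intros t. simpl. ring.
Qed.

Lemma holo_minus f g z : holo f z -> holo g z -> holo (fun w => f w - g w)%C z.
Proof. intros Hf Hg. apply holo_plus; [exact Hf|apply holo_opp; exact Hg]. Qed.

Lemma holo_pow n z : holo (fun w => w ^ n)%C z.
Proof.
  induction n as [|n IH]; [exact (holo_const 1%C z)|].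
  change (holo (fun w => w * w ^ n)%C z).
  exact (holo_mult (fun w => w) (fun w => w ^ n)%C z (holo_id z) IH).
Qed.

Lemma holo_Cinv (z : C) : z <> 0%C -> holo (fun w => / w)%C z.
Proof.
  intros Hz. assert (Hm : 0 < Cmod z) by (apply Cmod_gt_0; exact Hz).
  exists (- / (z * z))%C.
  apply (is_Cderive_of_quadratic_remainder _ _ _ (Cmod z / 2) (2 / Cmod z ^ 3)); [lra|..].
  { apply Rlt_le, Rdiv_lt_0_compat; [lra|apply pow_lt; lra]. }
  intros h Hh.
  (* |z + h| >= |z| / 2 keeps the remainder h^2 / (z^2 (z + h)) quadratic *)
  assert (Hzh : Cmod z / 2 <= Cmod (z + h)%C).
  { assert (Htri := Cmod_triangle (z + h)%C (- h)%C).
    replace (z + h + - h)%C with z in Htri by ring. rewrite Cmod_opp in Htri. lra. }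
  assert (Hzh0 : (z + h)%C <> 0%C) by (intro E; rewrite E, Cmod_0 in Hzh; lra).
  replace (/ (z + h) - / z - h * - / (z * z))%C with (h * h / (z * z * (z + h)))%C
    by (field; split; auto).
  rewrite Cmod_div by (repeat apply Cmult_neq_0; auto). rewrite !Cmod_mult.
  assert (H0 := Cmod_ge_0 h).
  apply Rle_div_l; [repeat apply Rmult_lt_0_compat; lra|].
  replace (2 / Cmod z ^ 3 * (Cmod h * Cmod h) * (Cmod z * Cmod z * Cmod (z + h)%C))
    with (Cmod h * Cmod h * (2 * Cmod (z + h)%C / Cmod z)) by (field; lra).
  rewrite <- (Rmult_1_r (Cmod h * Cmod h)) at 1.
  apply Rmult_le_compat_l; [nra|].
  apply Rle_div_r; lra.
Qed.

Lemma holo_div f g z : holo f z -> holo g z -> g z <> 0%C -> holo (fun w => f w / g w)%C z.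
Proof.
  intros Hf Hg Hz. apply (holo_mult f (fun w => / g w)%C); auto.
  apply (holo_comp (fun w => / w)%C g); auto. apply holo_Cinv; auto.
Qed.

Lemma holo_ext_near f g z : (exists d, 0 < d /\ forall w, Cmod (w - z)%C < d -> f w = g w) ->
  holo f z -> holo g z.
Proof.
  intros [d [Hd E]] [l Hl]. exists l. eapply is_derive_ext_loc; [|exact Hl].
  set (nf := @norm_factor _ (AbsRing_NormedModule C_AbsRing)).
  assert (Hnf : 0 < nf) by apply norm_factor_gt_0.
  exists (mkposreal (d / nf) (Rdiv_lt_0_compat _ _ Hd Hnf)). intros y By. apply E.
  apply (norm_compat2 (V := AbsRing_NormedModule C_AbsRing)) in By. simpl in By.
  change (Cmod (y - z)%C < nf * (d / nf)) in By.
  replace (nf * (d / nf)) with d in By by (field; lra). exact By.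
Qed.

Lemma holo_continuous f z : holo f z -> forall e, 0 < e ->
  exists d, 0 < d /\ forall w, Cmod (w - z)%C < d -> Cmod (f w - f z)%C < e.
Proof.
  intros [l Hl] e He.
  destruct (is_Cderive_remainder f z l Hl 1 Rlt_0_1) as [d [Hd Hs]].
  assert (Hl0 := Cmod_ge_0 l).
  exists (Rmin d (e / (2 + Cmod l))). split.
  { apply Rmin_glb_lt; [lra|apply Rdiv_lt_0_compat; lra]. }
  intros w Hw. set (h := (w - z)%C).
  replace w with (z + h)%C by (unfold h; ring).
  assert (Hhd : Cmod h < d) by (eapply Rlt_le_trans; [exact Hw|apply Rmin_l]).
  assert (Hhe : Cmod h < e / (2 + Cmod l)) by (eapply Rlt_le_trans; [exact Hw|apply Rmin_r]).
  specialize (Hs h Hhd).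
  replace (f (z + h)%C - f z)%C with ((f (z + h)%C - f z - h * l) + h * l)%C by ring.
  eapply Rle_lt_trans; [apply Cmod_triangle|]. rewrite Cmod_mult.
  assert (Hh0 := Cmod_ge_0 h).
  apply Rmult_lt_compat_r with (r := 2 + Cmod l) in Hhe; [|lra].
  replace (e / (2 + Cmod l) * (2 + Cmod l)) with e in Hhe by (field; lra).
  nra.
Qed.

Lemma Ccont_on_of_holo (D : Cx -> Prop) (f : Cx -> Cx) :
  (forall z, D z -> holo f z) -> Ccont_on D f.
Proof.
  intros H z Dz e He. destruct (holo_continuous f z (H z Dz) e He) as [d [Hd Hc]].
  exists d. split; auto.
Qed.

Lemma Cholo_on_of_holo (D : Cx -> Prop) (f : Cx -> Cx) :
  (forall z, D z -> holo f z) -> Cholo_on D f.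
Proof.
  intros H z Dz. destruct (H z Dz) as [l Hl]. exists l. intros e He.
  destruct (is_Cderive_remainder f z l Hl (e / 2)) as [d [Hd Hs]]; [lra|].
  exists d. split; auto. intros h Hh0 Hh.
  change (Cmod ((f (z + h)%C - f z) / h - l)%C < e).
  assert (Hh0' : h <> RtoC 0) by exact Hh0.
  assert (Hp : 0 < Cmod h) by (apply Cmod_gt_0; auto).
  replace ((f (z + h)%C - f z) / h - l)%C with ((f (z + h)%C - f z - h * l) / h)%C
    by (field; auto).
  rewrite Cmod_div by auto. apply Rlt_div_l; auto.
  eapply Rle_lt_trans; [apply Hs; auto|]. nra.
Qed.

(** * The complex exponential and its Taylor remainders *)

Definition cexp (z : C) : C := (exp (fst z) * cos (snd z), exp (fst z) * sin (snd z)).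

Lemma cexp_add z w : cexp (z + w)%C = (cexp z * cexp w)%C.
Proof.
  destruct z as [a b], w as [c d]. unfold cexp. simpl.
  rewrite exp_plus, cos_plus, sin_plus. unfold Cmult; simpl. f_equal; ring.
Qed.

Lemma cexp_0 : cexp 0%C = 1%C.
Proof.
  unfold cexp. simpl. rewrite exp_0, cos_0, sin_0.
  apply injective_projections; simpl; ring.
Qed.

Lemma Cmod_cexp z : Cmod (cexp z) = exp (fst z).
Proof.
  destruct z as [a b]. unfold Cmod, cexp. cbn [fst snd].
  replace ((exp a * cos b) ^ 2 + (exp a * sin b) ^ 2)
    with (exp a * exp a * (Rsqr (sin b) + Rsqr (cos b))) by (unfold Rsqr; ring).
  rewrite sin2_cos2, Rmult_1_r. apply sqrt_square, Rlt_le, exp_pos.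
Qed.

Fixpoint exp_taylor (n : nat) (h : C) : C :=
  match n with
  | O => 0%C
  | S m => (exp_taylor m h + h ^ m / RtoC (INR (fact m)))%C
  end.

Definition exp_rem (n : nat) (h : C) : C := (cexp h - exp_taylor n h)%C.

Lemma exp_rem_S n h : exp_rem (S n) h = (exp_rem n h - h ^ n / RtoC (INR (fact n)))%C.
Proof. unfold exp_rem. simpl. ring. Qed.

Lemma RtoC_INR_fact_neq_0 n : RtoC (INR (fact n)) <> RtoC 0.
Proof. intros E. apply (INR_fact_neq_0 n). now injection E. Qed.

Lemma is_Cderive_pow (n : nat) (p : C) : is_Cderive (fun z => z ^ S n)%C p (RtoC (INR (S n)) * p ^ n)%C.
Proof.
  induction n as [|n IH].
  - replace (RtoC (INR 1) * p ^ 0)%C with (one : C)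
      by (change (RtoC 1 = RtoC 1 * RtoC 1)%C; ring).
    eapply is_derive_ext; [|exact (is_derive_id (K := C_AbsRing) p)].
    intros t. exact (eq_sym (Cpow_1_r t)).
  - replace (RtoC (INR (S (S n))) * p ^ S n)%C
      with (plus (mult one (p ^ S n)%C) (mult p (RtoC (INR (S n)) * p ^ n)%C)).
    + exact (is_derive_mult (K := C_AbsRing) (fun z => z) (fun z => z ^ S n)%C p _ _
               (is_derive_id (K := C_AbsRing) p) IH Cmult_comm).
    + change one with (RtoC 1).
      change (plus ?a ?b) with (a + b)%C. change (mult ?a ?b) with (a * b)%C.
      rewrite (S_INR (S n)), RtoC_plus. simpl. ring.
Qed.

Lemma is_Cderive_exp_taylor (n : nat) (p : C) : is_Cderive (exp_taylor (S n)) p (exp_taylor n p).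
Proof.
  induction n as [|n IH].
  - change (exp_taylor 0 p) with (zero : C).
    eapply is_derive_ext;
      [|exact (is_derive_const (K := C_AbsRing) (V := AbsRing_NormedModule C_AbsRing) (RtoC 1) p)].
    intros t. change (RtoC 1 = 0 + RtoC 1 / RtoC 1)%C. field.
  - set (c := RtoC (INR (fact (S n)))).
    replace (exp_taylor (S n) p)
      with (plus (exp_taylor n p)
                 (plus (mult (RtoC (INR (S n)) * p ^ n)%C (/ c)%C) (mult (p ^ S n)%C zero))).
    + eapply is_derive_ext;
        [|exact (is_derive_plus (K := C_AbsRing) (V := AbsRing_NormedModule C_AbsRing) _
                   (fun z => z ^ S n * / c)%C p _ _ IH
                   (is_derive_mult (K := C_AbsRing) (fun z => z ^ S n)%C (fun _ => / c)%C p _ _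
                      (is_Cderive_pow n p) (is_derive_const _ _) Cmult_comm))].
      intros t. reflexivity.
    + change (exp_taylor n p + (RtoC (INR (S n)) * p ^ n * / c + p ^ S n * 0)
              = exp_taylor n p + p ^ n / RtoC (INR (fact n)))%C.
      unfold c. rewrite fact_simpl, mult_INR, RtoC_mult.
      field. split; [apply RtoC_INR_fact_neq_0|].
      intros E. apply (not_0_INR (S n)); [discriminate|]. now injection E.
Qed.

Lemma exp_taylor_at_0 n : exp_taylor (S n) 0%C = 1%C.
Proof.
  induction n as [|n IH].
  - change (0 + RtoC 1 / RtoC 1 = RtoC 1)%C. field.
  - change (exp_taylor (S n) 0 + 0 ^ S n / RtoC (INR (fact (S n))) = 1)%C.
    rewrite IH. change (RtoC 1 + 0 * 0 ^ n / RtoC (INR (fact (S n))) = RtoC 1)%C.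
    unfold Cdiv. ring.
Qed.

Lemma dot_le_norms x1 x2 y1 y2 :
  x1 * y1 + x2 * y2 <= sqrt (x1 ^ 2 + x2 ^ 2) * sqrt (y1 ^ 2 + y2 ^ 2).
Proof.
  rewrite <- sqrt_mult by nra.
  apply Rsqr_incr_0_var; [|apply sqrt_pos].
  rewrite Rsqr_sqrt by nra. unfold Rsqr.
  assert (H := pow2_ge_0 (x1 * y2 - x2 * y1)). nra.
Qed.

(* Mean value inequality for a curve in C, obtained from the real MVT applied to
   the projection of the curve on the direction of [g 1 - g 0]. *)
Lemma mean_value_ineq_C (g dg : R -> C) M :
  (forall t, derivable_pt_lim (fun s => fst (g s)) t (fst (dg t))) ->
  (forall t, derivable_pt_lim (fun s => snd (g s)) t (snd (dg t))) ->
  (forall t, 0 <= t <= 1 -> Cmod (dg t) <= M) -> Cmod (g 1 - g 0)%C <= M.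
Proof.
  intros H1 H2 HM.
  set (c := (g 1 - g 0)%C).
  set (psi := fun s => fst c * fst (g s) + snd c * snd (g s)).
  destruct (MVT_cor2 psi (fun s => fst c * fst (dg s) + snd c * snd (dg s)) 0 1 Rlt_0_1)
    as [tau [Ht Hint]].
  { intros t _. unfold psi.
    apply (derivable_pt_lim_plus (fun s => fst c * fst (g s)) (fun s => snd c * snd (g s))).
    - apply (derivable_pt_lim_scal (fun s => fst (g s))). apply H1.
    - apply (derivable_pt_lim_scal (fun s => snd (g s))). apply H2. }
  assert (Hc2 : psi 1 - psi 0 = fst c ^ 2 + snd c ^ 2) by (unfold psi, c; simpl; ring).
  rewrite Hc2, Rminus_0_r, Rmult_1_r in Ht.
  assert (HCS := dot_le_norms (fst c) (snd c) (fst (dg tau)) (snd (dg tau))).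
  assert (HMt : Cmod (dg tau) <= M) by (apply HM; lra).
  unfold Cmod in *. fold c.
  set (A := sqrt (fst c ^ 2 + snd c ^ 2)) in *.
  set (B := sqrt (fst (dg tau) ^ 2 + snd (dg tau) ^ 2)) in *.
  assert (HA2 : A * A = fst c ^ 2 + snd c ^ 2) by (apply sqrt_sqrt; nra).
  assert (HA0 : 0 <= A) by apply sqrt_pos.
  assert (HB0 : 0 <= B) by apply sqrt_pos.
  nra.
Qed.

Lemma im_le_Cmod (c : C) : Rabs (Im c) <= Cmod c.
Proof.
  destruct c as [x y]. unfold Cmod, Im. cbn [fst snd].
  rewrite <- sqrt_Rsqr_abs. apply sqrt_le_1_alt. unfold Rsqr. nra.
Qed.

Lemma is_Cderive_along_ray (F : C -> C) l h t0 :
  is_Cderive F (RtoC t0 * h)%C l ->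
  derivable_pt_lim (fun t => fst (F (RtoC t * h)%C)) t0 (fst (h * l)%C) /\
  derivable_pt_lim (fun t => snd (F (RtoC t * h)%C)) t0 (snd (h * l)%C).
Proof.
  intros Hd.
  assert (Hh0 := Cmod_ge_0 h).
  assert (key : forall eps, 0 < eps -> exists delta : posreal, forall dt, dt <> 0 ->
     Rabs dt < delta ->
     Cmod (F (RtoC (t0 + dt) * h)%C - F (RtoC t0 * h)%C - RtoC dt * (h * l))%C
       <= eps / 2 * Rabs dt).
  { intros eps Heps.
    destruct (is_Cderive_remainder F _ l Hd (eps / 2 / (Cmod h + 1))) as [d [Hd0 Hs]].
    { apply Rdiv_lt_0_compat; lra. }
    exists (mkposreal _ (Rdiv_lt_0_compat d (Cmod h + 1) Hd0 ltac:(lra))).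
    intros dt Hdt Hdt2. simpl in Hdt2.
    replace (RtoC (t0 + dt) * h)%C with (RtoC t0 * h + RtoC dt * h)%C
      by (rewrite RtoC_plus; ring).
    assert (HH : Cmod (RtoC dt * h)%C < d).
    { rewrite Cmod_mult, Cmod_R.
      apply Rmult_lt_compat_r with (r := Cmod h + 1) in Hdt2; [|lra].
      replace (d / (Cmod h + 1) * (Cmod h + 1)) with d in Hdt2 by (field; lra).
      assert (0 <= Rabs dt) by apply Rabs_pos. nra. }
    specialize (Hs _ HH).
    replace (RtoC dt * (h * l))%C with (RtoC dt * h * l)%C by ring.
    eapply Rle_trans; [exact Hs|]. rewrite Cmod_mult, Cmod_R.
    assert (0 <= Rabs dt) by apply Rabs_pos.
    apply Rle_trans with (eps / 2 / (Cmod h + 1) * (Rabs dt * (Cmod h + 1))).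
    { apply Rmult_le_compat_l; [apply Rlt_le, Rdiv_lt_0_compat; lra|].
      apply Rmult_le_compat_l; lra. }
    right. field. lra. }
  split; intros eps Heps; destruct (key eps Heps) as [delta Hdl]; exists delta;
    intros dt Hdt Hdt2; specialize (Hdl dt Hdt Hdt2);
    set (X := (F (RtoC (t0 + dt) * h)%C - F (RtoC t0 * h)%C - RtoC dt * (h * l))%C) in *;
    assert (Hp : 0 < Rabs dt) by (apply Rabs_pos_lt; auto).
  - replace ((fst (F (RtoC (t0 + dt) * h)%C) - fst (F (RtoC t0 * h)%C)) / dt - fst (h * l)%C)
      with (fst X / dt) by (unfold X; simpl; field; auto).
    unfold Rdiv. rewrite Rabs_mult, Rabs_inv.
    assert (HX := re_le_Cmod X). unfold Re in HX.
    apply Rle_lt_trans with (eps / 2 * Rabs dt * / Rabs dt).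
    { apply Rmult_le_compat_r; [apply Rlt_le, Rinv_0_lt_compat; auto|lra]. }
    replace (eps / 2 * Rabs dt * / Rabs dt) with (eps / 2) by (field; lra). lra.
  - replace ((snd (F (RtoC (t0 + dt) * h)%C) - snd (F (RtoC t0 * h)%C)) / dt - snd (h * l)%C)
      with (snd X / dt) by (unfold X; simpl; field; auto).
    unfold Rdiv. rewrite Rabs_mult, Rabs_inv.
    assert (HX := im_le_Cmod X). unfold Im in HX.
    apply Rle_lt_trans with (eps / 2 * Rabs dt * / Rabs dt).
    { apply Rmult_le_compat_r; [apply Rlt_le, Rinv_0_lt_compat; auto|lra]. }
    replace (eps / 2 * Rabs dt * / Rabs dt) with (eps / 2) by (field; lra). lra.
Qed.

Lemma cexp_along_ray (h : C) t0 :
  derivable_pt_lim (fun t => fst (cexp (RtoC t * h)%C)) t0 (fst (h * cexp (RtoC t0 * h))%C) /\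
  derivable_pt_lim (fun t => snd (cexp (RtoC t * h)%C)) t0 (snd (h * cexp (RtoC t0 * h))%C).
Proof.
  destruct h as [a b]. split; apply is_derive_Reals; unfold cexp; simpl.
  - auto_derive; [exact I|]. unfold Rminus. ring.
  - auto_derive; [exact I|]. unfold Rminus. ring.
Qed.

Lemma exp_rem_along_ray n (h : C) t :
  derivable_pt_lim (fun s => fst (exp_rem (S n) (RtoC s * h)%C)) t
    (fst (h * exp_rem n (RtoC t * h))%C) /\
  derivable_pt_lim (fun s => snd (exp_rem (S n) (RtoC s * h)%C)) t
    (snd (h * exp_rem n (RtoC t * h))%C).
Proof.
  destruct (cexp_along_ray h t) as [Hc1 Hc2].
  destruct (is_Cderive_along_ray (exp_taylor (S n)) _ h t (is_Cderive_exp_taylor n _))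
    as [Ht1 Ht2].
  split.
  - replace (fst (h * exp_rem n (RtoC t * h))%C)
      with (fst (h * cexp (RtoC t * h))%C - fst (h * exp_taylor n (RtoC t * h))%C)
      by (unfold exp_rem; simpl; ring).
    exact (derivable_pt_lim_minus _ _ t _ _ Hc1 Ht1).
  - replace (snd (h * exp_rem n (RtoC t * h))%C)
      with (snd (h * cexp (RtoC t * h))%C - snd (h * exp_taylor n (RtoC t * h))%C)
      by (unfold exp_rem; simpl; ring).
    exact (derivable_pt_lim_minus _ _ t _ _ Hc2 Ht2).
Qed.

Lemma exp_le_mono x y : x <= y -> exp x <= exp y.
Proof.
  intros H. destruct (Req_dec x y) as [->|Hn]; [lra|]. apply Rlt_le, exp_increasing. lra.
Qed.

(* Induction on [n]: [exp_rem (S n)] vanishes at 0 and its derivative along the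
   segment [0, h] is [h * exp_rem n], so the mean value inequality applies. *)
Lemma Cmod_exp_rem_le (n : nat) (h : C) :
  Cmod (exp_rem n h) <= Cmod h ^ n * exp (Rmax 0 (fst h)).
Proof.
  revert h. induction n as [|n IH]; intros h.
  - unfold exp_rem. simpl. replace (cexp h - 0)%C with (cexp h) by ring.
    rewrite Cmod_cexp, Rmult_1_l. apply exp_le_mono, Rmax_r.
  - set (g := fun t => exp_rem (S n) (RtoC t * h)%C).
    assert (Hg : Cmod (g 1 - g 0)%C <= Cmod h ^ S n * exp (Rmax 0 (fst h))).
    { apply (mean_value_ineq_C g (fun t => h * exp_rem n (RtoC t * h))%C).
      - intros t. exact (proj1 (exp_rem_along_ray n h t)).
      - intros t. exact (proj2 (exp_rem_along_ray n h t)).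
      - intros t Ht. rewrite Cmod_mult.
        eapply Rle_trans; [apply Rmult_le_compat_l; [apply Cmod_ge_0|apply IH]|].
        rewrite Cmod_mult, Cmod_R, Rabs_pos_eq by lra.
        assert (Hh := Cmod_ge_0 h).
        assert (Hpow : (t * Cmod h) ^ n <= Cmod h ^ n) by (apply pow_incr; nra).
        assert (Hexp : exp (Rmax 0 (fst (RtoC t * h)%C)) <= exp (Rmax 0 (fst h))).
        { apply exp_le_mono. simpl. replace (t * fst h - 0 * snd h) with (t * fst h) by ring.
          unfold Rmax. destruct (Rle_dec 0 (t * fst h)), (Rle_dec 0 (fst h)); nra. }
        assert (0 <= (t * Cmod h) ^ n) by (apply pow_le; nra).
        assert (0 <= exp (Rmax 0 (fst (RtoC t * h)%C))) by apply Rlt_le, exp_pos.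
        simpl pow. rewrite Rmult_assoc. apply Rmult_le_compat_l; [exact Hh|].
        apply Rmult_le_compat; assumption. }
    unfold g in Hg.
    replace (RtoC 1 * h)%C with h in Hg by ring.
    replace (RtoC 0 * h)%C with (RtoC 0) in Hg by ring.
    unfold exp_rem at 2 in Hg. rewrite exp_taylor_at_0, cexp_0 in Hg.
    replace (exp_rem (S n) h - (RtoC 1 - RtoC 1))%C with (exp_rem (S n) h) in Hg by ring.
    exact Hg.
Qed.

Lemma exp_Rmax_le_3 r : r <= 1 -> exp (Rmax 0 r) <= 3.
Proof.
  intros H. apply Rle_trans with (exp 1); [|apply exp_le_3].
  apply exp_le_mono, Rmax_lub; lra.
Qed.

Lemma Cmod_exp_rem_le_3 n h : Cmod h <= 1 -> Cmod (exp_rem n h) <= 3 * Cmod h ^ n.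
Proof.
  intros H. eapply Rle_trans; [apply Cmod_exp_rem_le|].
  assert (0 <= Cmod h ^ n) by (apply pow_le, Cmod_ge_0).
  rewrite Rmult_comm. apply Rmult_le_compat_r; auto. apply exp_Rmax_le_3.
  assert (Hre := re_le_Cmod h). unfold Re in Hre.
  assert (Habs := Rle_abs (fst h)). lra.
Qed.

Lemma is_Cderive_cexp z : is_Cderive cexp z (cexp z).
Proof.
  apply (is_Cderive_of_quadratic_remainder _ _ _ 1 (Cmod (cexp z) * 3)); [lra| |].
  { assert (H := Cmod_ge_0 (cexp z)). lra. }
  intros h Hh.
  replace (cexp (z + h) - cexp z - h * cexp z)%C with (cexp z * exp_rem 2 h)%C
    by (rewrite !exp_rem_S, cexp_add; unfold exp_rem; simpl; field).
  rewrite Cmod_mult, Rmult_assoc. apply Rmult_le_compat_l; [apply Cmod_ge_0|].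
  eapply Rle_trans; [apply Cmod_exp_rem_le_3; auto|]. simpl. lra.
Qed.

Lemma holo_exp_rem n z : holo (exp_rem n) z.
Proof.
  apply holo_minus; [exists (cexp z); apply is_Cderive_cexp|].
  destruct n as [|n]; [exact (holo_const 0%C z)|].
  exists (exp_taylor n z). apply is_Cderive_exp_taylor.
Qed.

Definition phi (n : nat) (w : C) : C :=
  if Ceq_dec w (RtoC 0) then RtoC (/ INR (fact n)) else (exp_rem n w / w ^ n)%C.

Lemma phi_neq_0 n w : w <> RtoC 0 -> phi n w = (exp_rem n w / w ^ n)%C.
Proof. intros H. unfold phi. destruct (Ceq_dec w (RtoC 0)); tauto. Qed.

Lemma phi_0 n : phi n (RtoC 0) = RtoC (/ INR (fact n)).
Proof. unfold phi. destruct (Ceq_dec (RtoC 0) (RtoC 0)); tauto. Qed.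

Lemma holo_phi n z : holo (phi n) z.
Proof.
  destruct (Ceq_dec z (RtoC 0)) as [->|Hz].
  - exists (RtoC (/ INR (fact (S n)))).
    apply (is_Cderive_of_quadratic_remainder _ _ _ 1 3); [lra|lra|].
    intros h Hh. replace (RtoC 0 + h)%C with h by ring. rewrite phi_0.
    destruct (Ceq_dec h (RtoC 0)) as [->|Hh0].
    { rewrite phi_0, Cmult_0_l, Cmod_0. replace (_ - _ - _)%C with (RtoC 0) by ring.
      rewrite Cmod_0. lra. }
    (* the difference quotient error is the next Taylor remainder divided by h^n *)
    replace (phi n h - RtoC (/ INR (fact n)) - h * RtoC (/ INR (fact (S n))))%C
      with (exp_rem (S (S n)) h / h ^ n)%C.
    2:{ rewrite phi_neq_0, !exp_rem_S, !RtoC_inv, Cpow_S by auto using INR_fact_neq_0.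
        field. repeat split; auto using Cpow_nz, RtoC_INR_fact_neq_0. }
    assert (Hp : 0 < Cmod h) by (apply Cmod_gt_0; auto).
    rewrite Cmod_div, Cmod_pow by (apply Cpow_nz; auto).
    apply Rle_div_l; [apply pow_lt; lra|].
    eapply Rle_trans; [apply Cmod_exp_rem_le_3; auto|]. simpl. lra.
  - apply (holo_ext_near (fun w => exp_rem n w / w ^ n)%C).
    + exists (Cmod z). split; [apply Cmod_gt_0; auto|].
      intros w Hw. symmetry. apply phi_neq_0. intros ->.
      replace (RtoC 0 - z)%C with (- z)%C in Hw by ring. rewrite Cmod_opp in Hw. lra.
    + apply holo_div; [apply holo_exp_rem|apply holo_pow|apply Cpow_nz; auto].
Qed.

Lemma Cmod_phi_le n w : Cmod (phi n w) <= exp (Rmax 0 (fst w)).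
Proof.
  destruct (Ceq_dec w (RtoC 0)) as [->|Hw].
  - rewrite phi_0, Cmod_R. apply Rle_trans with (exp 0); [|apply exp_le_mono, Rmax_l].
    rewrite exp_0. assert (Hf : 1 <= INR (fact n)).
    { apply (le_INR 1). apply lt_O_fact. }
    rewrite Rabs_pos_eq by (apply Rlt_le, Rinv_0_lt_compat; lra).
    rewrite <- Rinv_1. apply Rinv_le_contravar; lra.
  - rewrite phi_neq_0, Cmod_div, Cmod_pow by (try apply Cpow_nz; auto).
    assert (Hp : 0 < Cmod w) by (apply Cmod_gt_0; auto).
    apply Rle_div_l; [apply pow_lt; lra|].
    rewrite Rmult_comm. apply Cmod_exp_rem_le.
Qed.

Lemma Cmod_phi_le_3 n w : fst w <= 1 -> Cmod (phi n w) <= 3.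
Proof. intros H. eapply Rle_trans; [apply Cmod_phi_le|]. apply exp_Rmax_le_3, H. Qed.

Lemma phi1_neq_0 w : w <> RtoC 0 -> phi 1 w = ((cexp w - 1) / w)%C.
Proof.
  intros H. rewrite phi_neq_0 by auto. unfold exp_rem. simpl. field. auto.
Qed.

Lemma phi2_neq_0 w : w <> RtoC 0 -> phi 2 w = ((cexp w - 1 - w) / (w * w))%C.
Proof.
  intros H. rewrite phi_neq_0 by auto. unfold exp_rem. simpl. field. auto.
Qed.

(** * Estimates for 2x2 matrices *)

Lemma Cmod_add_le a b A B : Cmod a <= A -> Cmod b <= B -> Cmod (a + b)%C <= A + B.
Proof. intros. eapply Rle_trans; [apply Cmod_triangle|lra]. Qed.

Lemma Cmod_sub_le a b A B : Cmod a <= A -> Cmod b <= B -> Cmod (a - b)%C <= A + B.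
Proof. intros. eapply Rle_trans; [apply Cmod_triangle|]. rewrite Cmod_opp. lra. Qed.

Lemma Cmod_mul_le a b A B : Cmod a <= A -> Cmod b <= B -> Cmod (a * b)%C <= A * B.
Proof. intros. rewrite Cmod_mult. apply Rmult_le_compat; auto; apply Cmod_ge_0. Qed.

Lemma Cmod_opp_le a A : Cmod a <= A -> Cmod (- a)%C <= A.
Proof. intros. rewrite Cmod_opp. auto. Qed.

Lemma Cmod_IZR_le z : Cmod (RtoC (IZR z)) <= IZR (Z.abs z).
Proof. rewrite Cmod_R, <- abs_IZR. lra. Qed.

Lemma Cmod_Ci : Cmod Ci = 1.
Proof.
  unfold Cmod. cbn [fst snd Ci]. replace (0 ^ 2 + 1 ^ 2) with 1 by ring. apply sqrt_1.
Qed.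

Lemma Cmod_div_le n d K : d <> RtoC 0 -> Cmod n <= K * Cmod d -> Cmod (n / d)%C <= K.
Proof.
  intros Hd H. rewrite Cmod_div by auto.
  assert (0 < Cmod d) by (apply Cmod_gt_0; auto). apply Rle_div_l; auto.
Qed.

Lemma Cmod_RtoC_div a c : 0 <= a -> 0 < c -> Cmod (RtoC a / RtoC c)%C = a / c.
Proof.
  intros Ha Hc. rewrite Cmod_div, !Cmod_R, !Rabs_pos_eq by (try intro E; try injection E; lra).
  reflexivity.
Qed.

Ltac bound_Cmod := match goal with
 | |- Cmod _ <= _ => eassumption
 | |- Cmod (RtoC (IZR _)) <= _ => apply Cmod_IZR_le
 | |- Cmod (RtoC (IZR _) / RtoC (IZR _))%C <= _ => rewrite Cmod_RtoC_div by lra; apply Rle_refl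
 | |- Cmod Ci <= _ => rewrite Cmod_Ci; apply Rle_refl
 | |- Cmod (?a + ?b)%C <= _ => eapply Cmod_add_le; [bound_Cmod|bound_Cmod]
 | |- Cmod (?a - ?b)%C <= _ => eapply Cmod_sub_le; [bound_Cmod|bound_Cmod]
 | |- Cmod (?a * ?b)%C <= _ => eapply Cmod_mul_le; [bound_Cmod|bound_Cmod]
 | |- Cmod (- ?a)%C <= _ => eapply Cmod_opp_le; bound_Cmod
 | |- Cmod _ <= _ => apply Rle_refl
 end.

Lemma M2_ext (A B : M2) :
  m11 A = m11 B -> m12 A = m12 B -> m21 A = m21 B -> m22 A = m22 B -> A = B.
Proof. destruct A, B; simpl; intros; subst; reflexivity. Qed.

Definition M2opp (A : M2) : M2 :=
  mkM2 (Defs.Copp (m11 A)) (Defs.Copp (m12 A)) (Defs.Copp (m21 A)) (Defs.Copp (m22 A)).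

Lemma m11_le_M2norm A : Cmod (m11 A) <= M2norm A.
Proof. unfold M2norm. eapply Rle_trans; [apply Rmax_l|apply Rmax_l]. Qed.
Lemma m12_le_M2norm A : Cmod (m12 A) <= M2norm A.
Proof. unfold M2norm. eapply Rle_trans; [apply Rmax_r|apply Rmax_l]. Qed.
Lemma m21_le_M2norm A : Cmod (m21 A) <= M2norm A.
Proof. unfold M2norm. eapply Rle_trans; [apply Rmax_l|apply Rmax_r]. Qed.
Lemma m22_le_M2norm A : Cmod (m22 A) <= M2norm A.
Proof. unfold M2norm. eapply Rle_trans; [apply Rmax_r|apply Rmax_r]. Qed.

Lemma M2norm_ge_0 A : 0 <= M2norm A.
Proof. eapply Rle_trans; [apply Cmod_ge_0|apply m11_le_M2norm]. Qed.

Lemma M2norm_le A K :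
  Cmod (m11 A) <= K -> Cmod (m12 A) <= K -> Cmod (m21 A) <= K -> Cmod (m22 A) <= K ->
  M2norm A <= K.
Proof. intros. unfold M2norm. repeat apply Rmax_lub; auto. Qed.

Lemma M2norm_opp A : M2norm (M2opp A) = M2norm A.
Proof. unfold M2norm, M2opp. cbn [m11 m12 m21 m22]. to_coquelicot. now rewrite !Cmod_opp. Qed.

Lemma M2norm_mul A B : M2norm (M2mul A B) <= 2 * (M2norm A * M2norm B).
Proof.
  assert (H1 := m11_le_M2norm A). assert (H2 := m12_le_M2norm A).
  assert (H3 := m21_le_M2norm A). assert (H4 := m22_le_M2norm A).
  assert (G1 := m11_le_M2norm B). assert (G2 := m12_le_M2norm B).
  assert (G3 := m21_le_M2norm B). assert (G4 := m22_le_M2norm B).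
  apply M2norm_le; unfold M2mul; cbn [m11 m12 m21 m22]; to_coquelicot;
    (eapply Rle_trans; [eapply Cmod_add_le; eapply Cmod_mul_le; eassumption|lra]).
Qed.

Lemma M2inv_correct (F : M2) : M2det F <> Defs.C0 ->
  M2mul (M2inv F) F = M2id /\ M2mul F (M2inv F) = M2id.
Proof.
  intros H. destruct F as [a b c d].
  unfold M2inv, M2mul, M2id, M2det in *. cbn [m11 m12 m21 m22] in *. to_coquelicot.
  split; apply M2_ext; cbn [m11 m12 m21 m22]; C_eq; field; auto.
Qed.

(* The determinant of [I + E] is at least [3/8] in modulus, hence the adjugate
   formula bounds the inverse. *)
Lemma M2inv_near_id (E : M2) : M2norm E <= 1 / 4 ->
  M2det (M2add M2id E) <> Defs.C0 /\ M2norm (M2inv (M2add M2id E)) <= 4.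
Proof.
  intros HE.
  assert (B1 := m11_le_M2norm E). assert (B2 := m12_le_M2norm E).
  assert (B3 := m21_le_M2norm E). assert (B4 := m22_le_M2norm E).
  assert (Hn := M2norm_ge_0 E).
  destruct E as [e1 e2 e3 e4]. cbn [m11 m12 m21 m22] in *.
  set (eta := M2norm (mkM2 e1 e2 e3 e4)) in *.
  set (dt := M2det (M2add M2id (mkM2 e1 e2 e3 e4))).
  assert (Ed : dt = (1 + (e1 + e4 + e1 * e4 - e2 * e3))%C).
  { unfold dt, M2det, M2add, M2id. cbn [m11 m12 m21 m22]. to_coquelicot. C_eq. ring. }
  assert (Hx : Cmod (e1 + e4 + e1 * e4 - e2 * e3)%C <= 2 * eta + 2 * (eta * eta)).
  { eapply Rle_trans; [bound_Cmod|nra]. }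
  assert (Hd : 3 / 8 <= Cmod dt).
  { rewrite Ed.
    assert (Htri := Cmod_triangle (1 + (e1 + e4 + e1 * e4 - e2 * e3))%C
                                  (- (e1 + e4 + e1 * e4 - e2 * e3))%C).
    replace (1 + (e1 + e4 + e1 * e4 - e2 * e3) + - (e1 + e4 + e1 * e4 - e2 * e3))%C
      with (RtoC 1) in Htri by ring.
    rewrite Cmod_opp, Cmod_R, Rabs_R1 in Htri. nra. }
  assert (Hdn : dt <> RtoC 0) by (intro E; rewrite E, Cmod_0 in Hd; lra).
  split; [exact Hdn|].
  assert (Hi : Cmod (/ dt)%C <= 8 / 3).
  { rewrite Cmod_inv by auto.
    apply Rle_trans with (/ (3 / 8)); [apply Rinv_le_contravar; lra|lra]. }
  apply M2norm_le; unfold M2inv, M2add, M2id; cbn [m11 m12 m21 m22]; fold dt; to_coquelicot;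
    (eapply Rle_trans; [eapply Cmod_mul_le; [exact Hi|bound_Cmod]|]); cbn [Z.abs]; lra.
Qed.

(* The product expands to [L + N Lm + Lp P + N P], where [Lp = diag(b, 1)],
   [Lm = diag(1, 1/b)] and [L = Lp Lm]. *)
Lemma diag_factorization_error (bb : C) (N P G : M2) : bb <> RtoC 0 ->
  M2add (M2mul (M2diag bb Defs.C1) P) (M2mul N (M2diag Defs.C1 (Defs.Cinv bb)))
    = M2sub G (M2diag bb (Defs.Cinv bb)) ->
  M2sub G (M2mul (M2mul (M2add M2id (M2mul N (M2inv (M2diag bb Defs.C1))))
                        (M2diag bb (Defs.Cinv bb)))
                 (M2add M2id (M2mul (M2inv (M2diag Defs.C1 (Defs.Cinv bb))) P)))
  = M2opp (M2mul N P).
Proof.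
  intros Hb H.
  assert (E1 := f_equal m11 H). assert (E2 := f_equal m12 H).
  assert (E3 := f_equal m21 H). assert (E4 := f_equal m22 H). clear H.
  destruct N as [n1 n2 n3 n4], P as [p1 p2 p3 p4], G as [g1 g2 g3 g4].
  unfold M2add, M2mul, M2sub, M2diag, M2inv, M2det, M2id, M2opp in *.
  cbn [m11 m12 m21 m22] in *. to_coquelicot.
  assert (Hg : forall g x y : C, x = (g - y)%C -> g = (x + y)%C) by (intros g x y ->; ring).
  apply Hg in E1, E2, E3, E4.
  apply M2_ext; cbn [m11 m12 m21 m22]; rewrite ?E1, ?E2, ?E3, ?E4; C_eq; field; auto.
Qed.

(** * The symbol [b] *)

Lemma Cplus_Ci_neq_0 (z : C) : 0 <= snd z -> (z + Ci)%C <> RtoC 0.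
Proof. intros H E. apply (f_equal snd) in E. simpl in E. lra. Qed.

Lemma Cminus_Ci_neq_0 (z : C) : snd z <= 0 -> (z - Ci)%C <> RtoC 0.
Proof. intros H E. apply (f_equal snd) in E. simpl in E. lra. Qed.

Lemma Cmod_Cminus_Ci_le (z : C) : 0 <= snd z -> Cmod (z - Ci)%C <= Cmod (z + Ci)%C.
Proof. intros H. apply sqrt_le_1_alt. simpl. nra. Qed.

Lemma Cmod_Cplus_Ci_le (z : C) : snd z <= 0 -> Cmod (z + Ci)%C <= Cmod (z - Ci)%C.
Proof. intros H. apply sqrt_le_1_alt. simpl. nra. Qed.

Lemma Cmod_sqr (w : C) : Cmod w * Cmod w = fst w ^ 2 + snd w ^ 2.
Proof. unfold Cmod. apply sqrt_sqrt. nra. Qed.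

Lemma Cmod_Cplus_Ci_ge z : 0 <= snd z -> Cmod z <= Cmod (z + Ci)%C /\ 1 <= Cmod (z + Ci)%C.
Proof.
  intros H. assert (A := Cmod_sqr z). assert (B := Cmod_sqr (z + Ci)%C). simpl in B.
  assert (0 <= Cmod z) by apply Cmod_ge_0. assert (0 <= Cmod (z + Ci)%C) by apply Cmod_ge_0.
  split; nra.
Qed.

Lemma Cmod_Cminus_Ci_ge z : snd z <= 0 -> Cmod z <= Cmod (z - Ci)%C /\ 1 <= Cmod (z - Ci)%C.
Proof.
  intros H. assert (A := Cmod_sqr z). assert (B := Cmod_sqr (z - Ci)%C). simpl in B.
  assert (0 <= Cmod z) by apply Cmod_ge_0. assert (0 <= Cmod (z - Ci)%C) by apply Cmod_ge_0.
  split; nra.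
Qed.

Lemma Cinv_0 : Cinv (RtoC 0) = RtoC 0.
Proof.
  unfold Cinv. simpl. replace (0 * (0 * 1) + 0 * (0 * 1)) with 0 by ring.
  unfold Rdiv. rewrite Rinv_0, !Rmult_0_r. reflexivity.
Qed.

Lemma Cinv_involutive (w : C) : Cinv (Cinv w) = w.
Proof.
  destruct (Ceq_dec w (RtoC 0)) as [->|H]; [now rewrite !Cinv_0|]. field. auto.
Qed.

Lemma Cmod_Cinv_mul_le_1 (w : C) : Cmod (/ w * w)%C <= 1.
Proof.
  destruct (Ceq_dec w (RtoC 0)) as [->|H].
  - rewrite Cmult_0_r, Cmod_0. lra.
  - rewrite Cinv_l, Cmod_R, Rabs_R1 by auto. lra.
Qed.

Lemma Cmod_b_le_1 z : 0 <= snd z -> Cmod (b z) <= 1.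
Proof.
  intros Hz. unfold b. to_coquelicot.
  assert (Hp := Cplus_Ci_neq_0 z Hz).
  rewrite Cmod_div by auto. assert (0 < Cmod (z + Ci)%C) by (apply Cmod_gt_0; auto).
  apply Rle_div_l; auto. rewrite Rmult_1_l. apply Cmod_Cminus_Ci_le; auto.
Qed.

Lemma Cmod_inv_b_le_1 z : snd z <= 0 -> Cmod (/ b z)%C <= 1.
Proof.
  intros Hz. unfold b. to_coquelicot.
  assert (Hm := Cminus_Ci_neq_0 z Hz).
  destruct (Ceq_dec (z + Ci)%C (RtoC 0)) as [E|Hp].
  - rewrite E. unfold Cdiv. rewrite Cinv_0, Cmult_0_r, Cinv_0, Cmod_0. lra.
  - replace (/ ((z - Ci) / (z + Ci)))%C with ((z + Ci) / (z - Ci))%C by (field; auto).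
    rewrite Cmod_div by auto. assert (0 < Cmod (z - Ci)%C) by (apply Cmod_gt_0; auto).
    apply Rle_div_l; auto. rewrite Rmult_1_l. apply Cmod_Cplus_Ci_le; auto.
Qed.

Lemma b_real_neq_0 x : b (RtoC x) <> RtoC 0.
Proof.
  unfold b. to_coquelicot. intros E.
  assert (Hm : (RtoC x - Ci)%C <> RtoC 0) by (intros E'; injection E'; lra).
  assert (Hp : (RtoC x + Ci)%C <> RtoC 0) by (intros E'; injection E'; lra).
  revert E. unfold Cdiv. apply Cmult_neq_0; [exact Hm|]. intros E.
  assert (E' : ((RtoC x + Ci) * / (RtoC x + Ci))%C = RtoC 1) by (apply Cinv_r; auto).
  rewrite E, Cmult_0_r in E'. injection E'. lra.
Qed.

Lemma M2norm_inv_diag_w1_le_1 (w : C) : Cmod (/ w)%C <= 1 ->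
  M2norm (M2inv (M2diag w Defs.C1)) <= 1.
Proof.
  intros Hw. unfold M2inv, M2det, M2diag. cbn [m11 m12 m21 m22]. to_coquelicot.
  replace (w * RtoC 1 - RtoC 0 * RtoC 0)%C with w by ring.
  replace (/ w * - RtoC 0)%C with (RtoC 0) by ring.
  apply M2norm_le; cbn [m11 m12 m21 m22]; rewrite ?Cmod_0; try lra.
  - rewrite Cmult_1_r. exact Hw.
  - apply Cmod_Cinv_mul_le_1.
Qed.

(* Also for [w = 0], i.e. at [z = i], where [M2inv] returns the zero matrix
   because [Cinv 0 = 0]. *)
Lemma M2norm_inv_diag_1w_le_1 (w : C) : Cmod w <= 1 ->
  M2norm (M2inv (M2diag Defs.C1 (Defs.Cinv w))) <= 1.
Proof.
  intros Hw. unfold M2inv, M2det, M2diag. cbn [m11 m12 m21 m22]. to_coquelicot.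
  replace (RtoC 1 * / w - RtoC 0 * RtoC 0)%C with (/ w)%C by ring.
  rewrite Cinv_involutive.
  replace (w * - RtoC 0)%C with (RtoC 0) by ring.
  apply M2norm_le; cbn [m11 m12 m21 m22]; rewrite ?Cmod_0; try lra.
  - rewrite Cmult_comm. apply Cmod_Cinv_mul_le_1.
  - rewrite Cmult_1_r. exact Hw.
Qed.

Lemma M2norm_inv_Lamp_le_1 z : snd z <= 0 -> M2norm (M2inv (Lamp z)) <= 1.
Proof. intros Hz. apply (M2norm_inv_diag_w1_le_1 (b z)), Cmod_inv_b_le_1, Hz. Qed.

Lemma M2norm_inv_Lamm_le_1 z : 0 <= snd z -> M2norm (M2inv (Lamm z)) <= 1.
Proof. intros Hz. apply (M2norm_inv_diag_1w_le_1 (b z)), Cmod_b_le_1, Hz. Qed.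

(** * The solution of the additive problem *)

Definition damp (eps : R) : C := RtoC (exp (- eps)).
Definition nconst (eps : R) : C := (4 * (damp eps - 1) - 4 * RtoC eps * damp eps)%C.
Definition wU (eps : R) (z : C) : C := (Ci * RtoC eps * (z - Ci))%C.
Definition wL (eps : R) (z : C) : C := (- (Ci * RtoC eps * (z + Ci)))%C.

Definition np11 eps z : C :=
  (- 8 * RtoC eps * damp eps * phi 1 (wU eps z)
   + 8 * RtoC eps * RtoC eps * damp eps * phi 2 (wU eps z) - nconst eps)%C.
Definition np21 eps z : C :=
  ((6 * Ci * (damp eps - 1) - 4 * RtoC eps * damp eps * z * phi 1 (wU eps z)) / (z + Ci))%C.
Definition qp eps z : C :=
  ((Ci * (damp eps - 1) - RtoC eps * damp eps * z * phi 1 (wU eps z)) / (z + Ci))%C.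
Definition nm22 eps z : C :=
  (- 8 * RtoC eps * damp eps * phi 1 (wL eps z)
   + 8 * RtoC eps * RtoC eps * damp eps * phi 2 (wL eps z) - nconst eps)%C.
Definition nm21 eps z : C :=
  ((6 * Ci * (damp eps - 1) + 8 * RtoC eps * damp eps * z * phi 1 (wL eps z)) / (z - Ci))%C.
Definition qm eps z : C :=
  ((Ci * (damp eps - 1) + RtoC eps * damp eps * z * phi 1 (wL eps z)) / (z - Ci))%C.

Definition Nup (eps : R) (z : C) : M2 :=
  mkM2 (np11 eps z) (- (3 / 2) * np11 eps z)%C (np21 eps z) (- 8 * qp eps z + nconst eps)%C.
Definition Nlow (eps : R) (z : C) : M2 :=
  mkM2 (8 * qm eps z + nconst eps)%C ((3 / 2) * nm22 eps z)%C (nm21 eps z) (nm22 eps z).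

Lemma wU_real eps x : wU eps (RtoC x) = (eps, eps * x).
Proof. unfold wU. apply injective_projections; simpl; ring. Qed.
Lemma wL_real eps x : wL eps (RtoC x) = (eps, - (eps * x)).
Proof. unfold wL. apply injective_projections; simpl; ring. Qed.

Lemma cexp_wU_real eps x : cexp (wU eps (RtoC x)) = (RtoC (exp eps) * Cexpi (eps * x))%C.
Proof. rewrite wU_real. unfold cexp, Cexpi. apply injective_projections; simpl; ring. Qed.
Lemma cexp_wL_real eps x : cexp (wL eps (RtoC x)) = (RtoC (exp eps) * Cexpi (- (eps * x)))%C.
Proof. rewrite wL_real. unfold cexp, Cexpi. apply injective_projections; simpl; ring. Qed.

Lemma wU_real_neq_0 eps x : 0 < eps -> wU eps (RtoC x) <> RtoC 0.
Proof. intros H E. rewrite wU_real in E. injection E. lra. Qed.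
Lemma wL_real_neq_0 eps x : 0 < eps -> wL eps (RtoC x) <> RtoC 0.
Proof. intros H E. rewrite wL_real in E. injection E. lra. Qed.

Lemma Ci_sqr : (Ci * Ci = - 1)%C.
Proof. apply injective_projections; simpl; ring. Qed.

Lemma Ci_pow_SS n : (Ci ^ (S (S n)) = - Ci ^ n)%C.
Proof. change (Ci * (Ci * Ci ^ n) = - Ci ^ n)%C. rewrite Cmult_assoc, Ci_sqr. ring. Qed.

(* Each entry is a rational identity in [x], [e^(i eps x)] and [e^(-i eps x)]. *)
Ltac solve_entry_identity eps x :=
  unfold M2add, M2mul, M2sub, Lamp, Lamm, Lam, M2diag, Geps, Nup, Nlow, b; cbv beta zeta;
  cbn [m11 m12 m21 m22]; to_coquelicot;
  unfold np11, np21, qp, nm22, nm21, qm, nconst, damp;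
  rewrite ?phi1_neq_0, ?phi2_neq_0 by (apply wU_real_neq_0 || apply wL_real_neq_0; auto);
  rewrite ?cexp_wU_real, ?cexp_wL_real; unfold wU, wL;
  rewrite ?exp_Ropp, ?RtoC_inv by (apply Rgt_not_eq, exp_pos);
  rewrite ?RtoC_plus, ?RtoC_mult, ?RtoC_pow;
  replace (RtoC x ^ 2 + RtoC 1)%C with ((RtoC x + Ci) * (RtoC x - Ci))%C
    by ring [Ci_sqr];
  let Hp := fresh in let Hm := fresh in let He := fresh in let Hs := fresh in
  let eS := fresh "eS" in let eT := fresh "eT" in
  assert (Hp : (RtoC x + Ci)%C <> RtoC 0) by (let E := fresh in intro E; injection E; lra);
  assert (Hm : (RtoC x - Ci)%C <> RtoC 0) by (let E := fresh in intro E; injection E; lra);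
  assert (He : RtoC (exp eps) <> RtoC 0)
    by (let E := fresh in intro E; injection E; apply Rgt_not_eq, exp_pos);
  assert (Hs : RtoC eps <> RtoC 0) by (let E := fresh in intro E; injection E; lra);
  set (eS := Cexpi (eps * x)); set (eT := Cexpi (- (eps * x)));
  C_eq; field_simplify_eq;
  try (cbv beta; repeat rewrite Ci_pow_SS; rewrite ?Cpow_1_r; C_eq; ring);
  try (repeat split; auto using Ci_nz).

Lemma Nup_Nlow_on_R eps x : 0 < eps ->
  M2add (M2mul (Lamp (RtoC x)) (Nup eps (RtoC x))) (M2mul (Nlow eps (RtoC x)) (Lamm (RtoC x)))
  = M2sub (Geps eps x) (Lam (RtoC x)).
Proof.
  intros Heps. apply M2_ext.
  - solve_entry_identity eps x.
  - solve_entry_identity eps x.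
  - solve_entry_identity eps x.
  - solve_entry_identity eps x.
Qed.

Lemma holo_phi_comp n g z : holo g z -> holo (fun w => phi n (g w)) z.
Proof. intros H. apply (holo_comp (phi n) g z); [apply holo_phi|exact H]. Qed.

Ltac solve_holo :=
  match goal with
  | |- holo (fun w => w) _ => apply holo_id
  | |- holo (fun w => phi ?n (@?g w)) _ => apply (holo_phi_comp n g); solve_holo
  | |- holo (fun w => Cplus (@?f w) (@?g w)) _ => apply (holo_plus f g); solve_holo
  | |- holo (fun w => Cminus (@?f w) (@?g w)) _ => apply (holo_minus f g); solve_holo
  | |- holo (fun w => Cmult (@?f w) (@?g w)) _ => apply (holo_mult f g); solve_holo
  | |- holo (fun w => Copp (@?f w)) _ => apply (holo_opp f); solve_holo
  | |- holo (fun w => Cdiv (@?f w) (@?g w)) _ => apply (holo_div f g); [solve_holo|solve_holo|]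
  | |- holo (fun w => ?c) _ => exact (holo_const c _)
  end.

Lemma holo_Nup eps : M2entrywise (fun f => forall z, upper_closed z -> holo f z) (Nup eps).
Proof.
  unfold M2entrywise, Nup, np11, np21, qp, nconst, damp, wU. cbn [m11 m12 m21 m22].
  repeat split; intros z Hz; solve_holo;
    first [apply Cplus_Ci_neq_0, Hz | intros E; injection E; lra].
Qed.

Lemma holo_Nlow eps : M2entrywise (fun f => forall z, lower_closed z -> holo f z) (Nlow eps).
Proof.
  unfold M2entrywise, Nlow, nm22, nm21, qm, nconst, damp, wL. cbn [m11 m12 m21 m22].
  repeat split; intros z Hz; solve_holo;
    first [apply Cminus_Ci_neq_0, Hz | intros E; injection E; lra].
Qed.

Lemma M2_good_of_holo (Do Dc : Cx -> Prop) (F : Cx -> M2) :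
  (forall z, Do z -> Dc z) -> M2entrywise (fun f => forall z, Dc z -> holo f z) F ->
  M2bounded_on Dc F -> M2_good Do Dc F.
Proof.
  intros Hsub [H11 [H12 [H21 H22]]] Hb. split; [|split; [exact Hb|]].
  - repeat split; apply Ccont_on_of_holo; assumption.
  - repeat split; apply Cholo_on_of_holo; auto.
Qed.

Lemma Cmod_damp_sub_1_le eps : 0 <= eps -> Cmod (damp eps - 1)%C <= eps.
Proof.
  intros H. unfold damp. rewrite <- RtoC_minus, Cmod_R.
  assert (H1 := exp_ineq1_le (- eps)).
  assert (H2 : exp (- eps) <= 1) by (rewrite <- exp_0; apply exp_le_mono; lra).
  rewrite Rabs_left1; lra.
Qed.

Lemma Cmod_damp_le_1 eps : 0 <= eps -> Cmod (damp eps) <= 1.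
Proof.
  intros H. unfold damp. rewrite Cmod_R, Rabs_pos_eq by (apply Rlt_le, exp_pos).
  rewrite <- exp_0. apply exp_le_mono. lra.
Qed.

Lemma Cmod_nconst_le eps : 0 <= eps -> Cmod (nconst eps) <= 8 * eps.
Proof.
  intros He. assert (H1 := Cmod_damp_sub_1_le eps He). assert (H2 := Cmod_damp_le_1 eps He).
  assert (H3 : Cmod (RtoC eps) <= eps) by (rewrite Cmod_R, Rabs_pos_eq; lra).
  unfold nconst. eapply Rle_trans; [bound_Cmod|]. cbn [Z.abs]. nra.
Qed.

Lemma Cmod_phi_wU_le_3 n eps z : 0 <= eps <= 1 -> 0 <= snd z -> Cmod (phi n (wU eps z)) <= 3.
Proof. intros He Hz. apply Cmod_phi_le_3. unfold wU. simpl. nra. Qed.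

Lemma Cmod_phi_wL_le_3 n eps z : 0 <= eps <= 1 -> snd z <= 0 -> Cmod (phi n (wL eps z)) <= 3.
Proof. intros He Hz. apply Cmod_phi_le_3. unfold wL. simpl. nra. Qed.

Lemma M2norm_Nup_le eps z : 0 < eps <= 1 -> 0 <= snd z -> M2norm (Nup eps z) <= 84 * eps.
Proof.
  intros He Hz. assert (He' : 0 <= eps <= 1) by lra.
  assert (H1 := Cmod_damp_sub_1_le eps (proj1 He')). assert (H2 := Cmod_damp_le_1 eps (proj1 He')).
  assert (H3 : Cmod (RtoC eps) <= eps) by (rewrite Cmod_R, Rabs_pos_eq; lra).
  assert (H4 := Cmod_phi_wU_le_3 1 eps z He' Hz). assert (H5 := Cmod_phi_wU_le_3 2 eps z He' Hz).
  assert (H6 := Cmod_nconst_le eps (proj1 He')). destruct (Cmod_Cplus_Ci_ge z Hz) as [H7 H8].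
  assert (Hn := Cplus_Ci_neq_0 z Hz).
  assert (B11 : Cmod (np11 eps z) <= 56 * eps).
  { unfold np11. eapply Rle_trans; [bound_Cmod|]. cbn [Z.abs]. nra. }
  assert (BQ : Cmod (qp eps z) <= 4 * eps).
  { unfold qp. apply Cmod_div_le; auto. eapply Rle_trans; [bound_Cmod|]. nra. }
  apply M2norm_le; unfold Nup; cbn [m11 m12 m21 m22]; to_coquelicot.
  - lra.
  - eapply Rle_trans; [bound_Cmod|]. nra.
  - unfold np21. apply Cmod_div_le; auto. eapply Rle_trans; [bound_Cmod|]. cbn [Z.abs]. nra.
  - eapply Rle_trans; [bound_Cmod|]. cbn [Z.abs]. nra.
Qed.

Lemma M2norm_Nlow_le eps z : 0 < eps <= 1 -> snd z <= 0 -> M2norm (Nlow eps z) <= 84 * eps.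
Proof.
  intros He Hz. assert (He' : 0 <= eps <= 1) by lra.
  assert (H1 := Cmod_damp_sub_1_le eps (proj1 He')). assert (H2 := Cmod_damp_le_1 eps (proj1 He')).
  assert (H3 : Cmod (RtoC eps) <= eps) by (rewrite Cmod_R, Rabs_pos_eq; lra).
  assert (H4 := Cmod_phi_wL_le_3 1 eps z He' Hz). assert (H5 := Cmod_phi_wL_le_3 2 eps z He' Hz).
  assert (H6 := Cmod_nconst_le eps (proj1 He')). destruct (Cmod_Cminus_Ci_ge z Hz) as [H7 H8].
  assert (Hn := Cminus_Ci_neq_0 z Hz).
  assert (B22 : Cmod (nm22 eps z) <= 56 * eps).
  { unfold nm22. eapply Rle_trans; [bound_Cmod|]. cbn [Z.abs]. nra. }
  assert (BQ : Cmod (qm eps z) <= 4 * eps).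
  { unfold qm. apply Cmod_div_le; auto. eapply Rle_trans; [bound_Cmod|]. nra. }
  apply M2norm_le; unfold Nlow; cbn [m11 m12 m21 m22]; to_coquelicot.
  - eapply Rle_trans; [bound_Cmod|]. cbn [Z.abs]. nra.
  - eapply Rle_trans; [bound_Cmod|]. nra.
  - unfold nm21. apply Cmod_div_le; auto. eapply Rle_trans; [bound_Cmod|]. cbn [Z.abs]. nra.
  - lra.
Qed.

Lemma factorization_error_le eps x : 0 < eps <= 1 ->
  M2norm (M2sub (Geps eps x)
    (M2mul (M2mul (M2add M2id (M2mul (Nlow eps (RtoC x)) (M2inv (Lamp (RtoC x)))))
                  (Lam (RtoC x)))
           (M2add M2id (M2mul (M2inv (Lamm (RtoC x))) (Nup eps (RtoC x))))))
  <= 14112 * eps ^ 2.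
Proof.
  intros He. unfold Lamp, Lamm, Lam.
  rewrite (diag_factorization_error _ _ _ _ (b_real_neq_0 x) (Nup_Nlow_on_R eps x (proj1 He))).
  rewrite M2norm_opp. eapply Rle_trans; [apply M2norm_mul|].
  assert (Hm := M2norm_Nlow_le eps (RtoC x) He (Rle_refl 0)).
  assert (Hp := M2norm_Nup_le eps (RtoC x) He (Rle_refl 0)).
  assert (Hm0 := M2norm_ge_0 (Nlow eps (RtoC x))).
  assert (Hp0 := M2norm_ge_0 (Nup eps (RtoC x))).
  replace (14112 * eps ^ 2) with (2 * ((84 * eps) * (84 * eps))) by ring.
  apply Rmult_le_compat_l; [lra|]. apply Rmult_le_compat; assumption.
Qed.

Lemma M2norm_mul_le_quarter A B a c : M2norm A <= a -> M2norm B <= c -> a * c <= 1 / 8 ->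
  M2norm (M2mul A B) <= 1 / 4.
Proof.
  intros HA HB Hac. eapply Rle_trans; [apply M2norm_mul|].
  assert (H := Rmult_le_compat _ _ _ _ (M2norm_ge_0 A) (M2norm_ge_0 B) HA HB). lra.
Qed.

Lemma near_id_inverse_bounded (D : Cx -> Prop) (E : Cx -> M2) :
  (forall z, D z -> M2norm (E z) <= 1 / 4) ->
  exists H : Cx -> M2, M2bounded_on D H /\
    forall z, D z -> M2mul (H z) (M2add M2id (E z)) = M2id /\
                     M2mul (M2add M2id (E z)) (H z) = M2id.
Proof.
  intros HE. exists (fun z => M2inv (M2add M2id (E z))). split.
  - exists 4. intros z Hz. apply M2inv_near_id, HE, Hz.
  - intros z Hz. apply M2inv_correct, M2inv_near_id, HE, Hz.
Qed.

(* Restores the names of [Defs] ([RtoC], [Cmod], ...) shadowed by Coquelicot. *)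
Import Pilot.Defs.

Theorem mainTheorem3 :
  exists (Np Nm : R -> Cx -> M2),
    (forall eps, 0 < eps <= 1 ->
       M2_good upper_open upper_closed (Np eps) /\
       M2_good lower_open lower_closed (Nm eps) /\
       forall x : R,
         M2add (M2mul (Lamp (RtoC x)) (Np eps (RtoC x)))
               (M2mul (Nm eps (RtoC x)) (Lamm (RtoC x)))
         = M2sub (Geps eps x) (Lam (RtoC x))) /\
    (exists K d, 0 < d /\ forall eps, 0 < eps <= d ->
       (forall z, upper_closed z -> M2norm (Np eps z) <= K * eps) /\
       (forall z, lower_closed z -> M2norm (Nm eps z) <= K * eps)) /\
    (exists K d, 0 < d /\ forall eps, 0 < eps <= d -> forall x : R,
       M2norm (M2sub (Geps eps x)
         (M2mul (M2mul (M2add M2id (M2mul (Nm eps (RtoC x)) (M2inv (Lamp (RtoC x)))))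
                       (Lam (RtoC x)))
                (M2add M2id (M2mul (M2inv (Lamm (RtoC x))) (Np eps (RtoC x))))))
       <= K * eps ^ 2) /\
    (exists d, 0 < d /\ forall eps, 0 < eps <= d ->
       (exists Hm : Cx -> M2,
          M2bounded_on lower_closed Hm /\
          forall z, lower_closed z ->
            let F := M2add M2id (M2mul (Nm eps z) (M2inv (Lamp z))) in
            M2mul (Hm z) F = M2id /\ M2mul F (Hm z) = M2id) /\
       (exists Hp : Cx -> M2,
          M2bounded_on upper_closed Hp /\
          forall z, upper_closed z ->
            let F := M2add M2id (M2mul (M2inv (Lamm z)) (Np eps z)) in
            M2mul (Hp z) F = M2id /\ M2mul F (Hp z) = M2id)).
Proof.
  exists Nup, Nlow. split; [|split; [|split]].
  - intros eps He. split; [|split].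
    + apply M2_good_of_holo; [unfold upper_open, upper_closed; intros; lra|apply holo_Nup|].
      exists (84 * eps). intros z Hz. apply M2norm_Nup_le; auto.
    + apply M2_good_of_holo; [unfold lower_open, lower_closed; intros; lra|apply holo_Nlow|].
      exists (84 * eps). intros z Hz. apply M2norm_Nlow_le; auto.
    + intros x. apply Nup_Nlow_on_R. lra.
  - exists 84, 1. split; [lra|]. intros eps He.
    split; intros z Hz; [apply M2norm_Nup_le|apply M2norm_Nlow_le]; auto.
  - exists 14112, 1. split; [lra|]. intros eps He x. apply factorization_error_le, He.
  - exists (/ 1000). split; [lra|]. intros eps He. assert (He1 : 0 < eps <= 1) by lra.
    split; apply near_id_inverse_bounded; intros z Hz.
    + apply (M2norm_mul_le_quarter _ _ (84 * eps) 1);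
        [apply M2norm_Nlow_le|apply M2norm_inv_Lamp_le_1|lra]; auto.
    + apply (M2norm_mul_le_quarter _ _ 1 (84 * eps));
        [apply M2norm_inv_Lamm_le_1|apply M2norm_Nup_le|lra]; auto.
Qed.
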